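(* Let $\tau,K\ge1$ and $C\ge1$. Let $\lambda_i,\lambda_j,\lambda_k,\lambda_\ell\in\mathbb{H}$ with $\lambda_i\neq\lambda_j$, $\lambda_k\neq\lambda_\ell$ and $\{\lambda_i,\lambda_j\}\neq\{\lambda_k,\lambda_\ell\}$, and let $A_i,A_j,A_k,A_\ell\subset\mathbb{H}$ be finite sets such that each $X\in\{A_i,A_j,A_k,A_\ell\}$ satisfies $|X|\le C\tau$ and $E^+(X)\le C\tau^3/K$. Then \[ \big|\big((A_i+A_j)\times(A_i\lambda_i+A_j\lambda_j)\big)\cap\big((A_k+A_\ell)\times(A_k\lambda_k+A_\ell\lambda_\ell)\big)\big| \ll C\,\tau^2K^{-1/2}, \] where $(X+Y)\times(X\lambda+Y\mu)$ denotes the set of points $\{(a+b,\ a\lambda+b\mu): a\in X, b\in Y\}\subset\mathbb{H}^2$.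
   Context: $\mathbb{H}$ denotes the quaternions. For finite $X\subset\mathbb{H}$, $E^+(X)=|\{(a,b,c,d)\in X^4: a-b=c-d\}|$ is the additive energy. $X\lambda=\{x\lambda:x\in X\}$. $\ll$ hides an absolute constant. *)

From Stdlib Require Import Reals List.
Import ListNotations.
Open Scope R_scope.

Record quat : Type := mkQ { q0 : R; q1 : R; q2 : R; q3 : R }.

Definition qadd (x y : quat) : quat :=
  mkQ (q0 x + q0 y) (q1 x + q1 y) (q2 x + q2 y) (q3 x + q3 y).

Definition qsub (x y : quat) : quat :=
  mkQ (q0 x - q0 y) (q1 x - q1 y) (q2 x - q2 y) (q3 x - q3 y).

Definition qmul (x y : quat) : quat :=
  mkQ (q0 x * q0 y - q1 x * q1 y - q2 x * q2 y - q3 x * q3 y)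
      (q0 x * q1 y + q1 x * q0 y + q2 x * q3 y - q3 x * q2 y)
      (q0 x * q2 y - q1 x * q3 y + q2 x * q0 y + q3 x * q1 y)
      (q0 x * q3 y + q1 x * q2 y - q2 x * q1 y + q3 x * q0 y).

Definition quat_eq_dec (x y : quat) : {x = y} + {x <> y}.
Proof. decide equality; apply Req_EM_T. Defined.

(* A finite set X of quaternions is represented by a duplicate-free list;
   |X| = length X. *)

Definition energy (X : list quat) : nat :=
  length (filter
    (fun p : quat * quat * quat * quat =>
       let '(a, b, c, d) := p in
       if quat_eq_dec (qsub a b) (qsub c d) then true else false)
    (list_prod (list_prod (list_prod X X) X) X)).

Definition in_pts (X Y : list quat) (lam mu : quat) (p : quat * quat) : Prop :=
  exists a b, In a X /\ In b Y /\
    p = (qadd a b, qadd (qmul a lam) (qmul b mu)).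

Definition good_set (C tau K : R) (X : list quat) : Prop :=
  NoDup X /\ INR (length X) <= C * tau /\ INR (energy X) <= C * tau ^ 3 / K.

(* If p = (a + b, a li + b lj) = (c + d, c lk + d ll) with li, lj, lk <> ll, then
   a (li - ll) + b (lj - ll) = c (lk - ll), and p is determined by (a, b); so the
   number of points is at most the number T of solutions (a, b, c) in Ai x Aj x Ak of
   a u + b v = c w with u, v, w <> 0.  Writing r(z) for the number of representations
   z = a u + b v, AM-GM gives T = sum_c r(c w) <= t/2 sum_c r(c w)^2 + |Ak|/(2t), and
   sum_z r(z)^2 counts the solutions of (a - a') u = (b' - b) v, which is at most
   (E+(Ai) + E+(Aj))/2.  Taking t = sqrt K / tau balances the two terms; the case
   ll in {li, lj} reduces to the generic one by exchanging the roles of k and l. *)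
From Stdlib Require Import Reals List Lra Psatz.
Import ListNotations.
Open Scope R_scope.

Fixpoint lsum {T} (f : T -> R) (l : list T) : R :=
  match l with [] => 0 | x :: l' => f x + lsum f l' end.

Lemma lsum_ext {T} (f g : T -> R) l :
  (forall x, In x l -> f x = g x) -> lsum f l = lsum g l.
Proof.
  induction l as [|x l IH]; simpl; intros H; [reflexivity|].
  rewrite H, IH; auto.
Qed.

Lemma lsum_le {T} (f g : T -> R) l :
  (forall x, In x l -> f x <= g x) -> lsum f l <= lsum g l.
Proof.
  induction l as [|x l IH]; simpl; intros H; [lra|].
  pose proof (H x (or_introl eq_refl)). pose proof (IH (fun y Hy => H y (or_intror Hy))). lra.
Qed.

Lemma lsum_nonneg {T} (f : T -> R) l :
  (forall x, In x l -> 0 <= f x) -> 0 <= lsum f l.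
Proof.
  induction l as [|x l IH]; simpl; intros H; [lra|].
  pose proof (H x (or_introl eq_refl)). pose proof (IH (fun y Hy => H y (or_intror Hy))). lra.
Qed.

Lemma lsum_add {T} (f g : T -> R) l :
  lsum (fun x => f x + g x) l = lsum f l + lsum g l.
Proof. induction l; simpl; lra. Qed.

Lemma lsum_scal_l {T} (f : T -> R) c l :
  lsum (fun x => c * f x) l = c * lsum f l.
Proof. induction l; simpl; lra. Qed.

Lemma lsum_const {T} c (l : list T) : lsum (fun _ => c) l = c * INR (length l).
Proof. induction l; simpl length; rewrite ?S_INR; simpl; lra. Qed.

Lemma lsum_comm {T U} (f : T -> U -> R) l1 l2 :
  lsum (fun x => lsum (fun y => f x y) l2) l1 = lsum (fun y => lsum (fun x => f x y) l1) l2.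
Proof.
  induction l1; simpl.
  - induction l2; simpl; lra.
  - rewrite IHl1, <- lsum_add. reflexivity.
Qed.

Lemma lsum_app {T} (f : T -> R) l1 l2 : lsum f (l1 ++ l2) = lsum f l1 + lsum f l2.
Proof. induction l1; simpl; lra. Qed.

Lemma lsum_map {T U} (f : U -> R) (g : T -> U) l :
  lsum f (map g l) = lsum (fun x => f (g x)) l.
Proof. induction l; simpl; lra. Qed.

Lemma lsum_list_prod {T U} (f : T * U -> R) l1 l2 :
  lsum f (list_prod l1 l2) = lsum (fun x => lsum (fun y => f (x, y)) l2) l1.
Proof. induction l1; simpl; [lra|]. rewrite lsum_app, lsum_map, IHl1. reflexivity. Qed.

Lemma lsum_ge_term {T} (f : T -> R) l z :
  (forall y, In y l -> 0 <= f y) -> In z l -> f z <= lsum f l.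
Proof.
  induction l as [|x l IH]; simpl; intros H Hz; [contradiction|].
  pose proof (H x (or_introl eq_refl)).
  assert (0 <= lsum f l) by (apply lsum_nonneg; auto).
  destruct Hz as [<-|Hz]; [lra|].
  pose proof (IH (fun y Hy => H y (or_intror Hy)) Hz). lra.
Qed.

Lemma INR_length_filter {T} (p : T -> bool) l :
  INR (length (filter p l)) = lsum (fun x => if p x then 1 else 0) l.
Proof. induction l; simpl; [reflexivity|]. destruct (p a); simpl length; rewrite ?S_INR; lra. Qed.

Definition indic {T} (dec : forall x y : T, {x = y} + {x <> y}) (x y : T) : R :=
  if dec x y then 1 else 0.

Lemma indic_bounds {T} dec (x y : T) : 0 <= indic dec x y <= 1.
Proof. unfold indic; destruct dec; lra. Qed.

Lemma indic_sym {T} dec (x y : T) : indic dec x y = indic dec y x.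
Proof. unfold indic; destruct (dec x y), (dec y x); congruence. Qed.

Lemma indic_transport {T U} dec dec' (x y : T) (x' y' : U) :
  (x = y <-> x' = y') -> indic dec x y = indic dec' x' y'.
Proof. unfold indic; intros H; destruct (dec x y), (dec' x' y'); tauto. Qed.

Lemma lsum_indic_inj_le1 {T U} dec (k : T -> U) (z : U) l :
  (forall x y, k x = k y -> x = y) -> NoDup l ->
  lsum (fun x => indic dec z (k x)) l <= 1.
Proof.
  intros Hk Hl. induction Hl as [|x l Hx _ IH]; simpl; [lra|].
  unfold indic at 1. destruct (dec z (k x)) as [->|_]; [|lra].
  rewrite (lsum_ext _ (fun _ => 0)), lsum_const; [lra|].
  intros y Hy. unfold indic. destruct (dec (k x) (k y)) as [E|]; [|reflexivity].
  apply Hk in E. subst. contradiction.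
Qed.

Lemma ratio_amgm x y : 0 < x -> 0 < y -> 2 <= x / y + y / x.
Proof.
  intros Hx Hy.
  assert (E : x / y + y / x - 2 = (x - y) * (x - y) / (x * y)) by (field; lra).
  assert (0 <= (x - y) * (x - y) / (x * y)).
  { unfold Rdiv; apply Rmult_le_pos; [apply Rle_0_sqr|]. left. apply Rinv_0_lt_compat, Rmult_lt_0_compat; lra. }
  lra.
Qed.

Lemma div_mul_le x y : 0 <= x -> x / y * y <= x.
Proof.
  intros Hx. destruct (Req_dec y 0) as [->|Hy]; [rewrite Rmult_0_r; lra|].
  right; field; auto.
Qed.

Section Collisions.

Context {T : Type} (dec : forall x y : T, {x = y} + {x <> y}).

Definition fiber_card {X} (h : X -> T) (l : list X) (z : T) : R :=
  lsum (fun x => indic dec z (h x)) l.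

Lemma fiber_card_nonneg {X} (h : X -> T) l z : 0 <= fiber_card h l z.
Proof. apply lsum_nonneg; intros; apply indic_bounds. Qed.

Lemma fiber_card_ge1 {X} (h : X -> T) l x : In x l -> 1 <= fiber_card h l (h x).
Proof.
  intros Hx. eapply Rle_trans; [|apply (lsum_ge_term _ _ x); auto].
  - unfold indic. destruct dec; [lra|congruence].
  - intros; apply indic_bounds.
Qed.

Lemma weighted_collisions_le {X Y} (h : X -> T) (g : Y -> T) Ps Qs :
  lsum (fun p => lsum (fun q =>
      indic dec (h p) (g q) * (fiber_card h Ps (h p) / fiber_card g Qs (h p))) Qs) Ps
  <= lsum (fun p => fiber_card h Ps (h p)) Ps.
Proof.
  apply lsum_le; intros p _.
  rewrite (lsum_ext _ (fun q => fiber_card h Ps (h p) / fiber_card g Qs (h p) * indic dec (h p) (g q)))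
    by (intros; ring).
  rewrite lsum_scal_l. apply div_mul_le, fiber_card_nonneg.
Qed.

(* Weighted AM-GM: a collision h p = g q = z is charged r_h(z)/r_g(z) to p and r_g(z)/r_h(z) to q. *)
Lemma collisions_le {X Y} (h : X -> T) (g : Y -> T) Ps Qs :
  lsum (fun p => fiber_card g Qs (h p)) Ps
  <= (lsum (fun p => fiber_card h Ps (h p)) Ps + lsum (fun q => fiber_card g Qs (g q)) Qs) / 2.
Proof.
  unfold fiber_card at 1.
  apply Rle_trans with (lsum (fun p => lsum (fun q =>
      / 2 * (indic dec (h p) (g q) * (fiber_card h Ps (h p) / fiber_card g Qs (h p))) +
      / 2 * (indic dec (g q) (h p) * (fiber_card g Qs (g q) / fiber_card h Ps (g q)))) Qs) Ps).
  - apply lsum_le; intros p Hp. apply lsum_le; intros q Hq.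
    rewrite (indic_sym _ (g q)). unfold indic. destruct (dec (h p) (g q)) as [E|]; [|lra].
    pose proof (fiber_card_ge1 h Ps p Hp). pose proof (fiber_card_ge1 g Qs q Hq).
    rewrite <- E in *. pose proof (ratio_amgm (fiber_card h Ps (h p)) (fiber_card g Qs (h p))). lra.
  - rewrite (lsum_ext _ (fun p =>
        / 2 * lsum (fun q => indic dec (h p) (g q) * (fiber_card h Ps (h p) / fiber_card g Qs (h p))) Qs +
        / 2 * lsum (fun q => indic dec (g q) (h p) * (fiber_card g Qs (g q) / fiber_card h Ps (g q))) Qs))
      by (intros; rewrite lsum_add, !lsum_scal_l; reflexivity).
    rewrite lsum_add, !lsum_scal_l.
    pose proof (weighted_collisions_le h g Ps Qs) as Hh.
    pose proof (weighted_collisions_le g h Qs Ps) as Hg. rewrite lsum_comm in Hg.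
    lra.
Qed.

End Collisions.

Lemma quat_eq (x y : quat) :
  q0 x = q0 y -> q1 x = q1 y -> q2 x = q2 y -> q3 x = q3 y -> x = y.
Proof. destruct x, y; simpl; intros; subst; reflexivity. Qed.

Definition qzero : quat := mkQ 0 0 0 0.

Definition qnorm2 (w : quat) : R :=
  q0 w * q0 w + q1 w * q1 w + q2 w * q2 w + q3 w * q3 w.

Definition qinv (w : quat) : quat :=
  mkQ (q0 w / qnorm2 w) (- q1 w / qnorm2 w) (- q2 w / qnorm2 w) (- q3 w / qnorm2 w).

Lemma qnorm2_neq0 w : w <> qzero -> qnorm2 w <> 0.
Proof.
  intros Hw Hn. apply Hw. destruct w as [a b c d]; unfold qnorm2 in Hn; simpl in Hn.
  assert (a = 0) by nra. assert (b = 0) by nra. assert (c = 0) by nra. assert (d = 0) by nra.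
  subst; reflexivity.
Qed.

Lemma qmul_qinv_r x w : w <> qzero -> qmul (qmul x w) (qinv w) = x.
Proof.
  intros Hw. pose proof (qnorm2_neq0 w Hw) as Hn. unfold qnorm2 in Hn.
  destruct x, w; unfold qinv, qnorm2; apply quat_eq; simpl in *; field; exact Hn.
Qed.

Lemma qmul_cancel_r w x y : w <> qzero -> qmul x w = qmul y w -> x = y.
Proof. intros Hw E. rewrite <- (qmul_qinv_r x w Hw), <- (qmul_qinv_r y w Hw), E. reflexivity. Qed.

Lemma qsub_neq0 x y : x <> y -> qsub x y <> qzero.
Proof.
  intros Hxy E. apply Hxy. destruct x, y; unfold qsub, qzero in E; injection E; intros.
  apply quat_eq; simpl; lra.
Qed.

Lemma qadd_comm a b : qadd a b = qadd b a.
Proof. destruct a, b; apply quat_eq; simpl; ring. Qed.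

Lemma lin_eq_iff a b a' b' u v :
  qadd (qmul a u) (qmul b v) = qadd (qmul a' u) (qmul b' v) <->
  qmul (qsub a a') u = qmul (qsub b' b) v.
Proof.
  destruct a, b, a', b', u, v; unfold qadd, qsub, qmul; simpl.
  split; intros E; injection E; intros; apply quat_eq; simpl; lra.
Qed.

Notation qindic := (indic quat_eq_dec).

Definition renergy (X : list quat) : R :=
  lsum (fun a => lsum (fun b => lsum (fun c => lsum (fun d =>
    qindic (qsub a b) (qsub c d)) X) X) X) X.

Lemma INR_energy X : INR (energy X) = renergy X.
Proof.
  unfold energy, renergy. rewrite INR_length_filter, !lsum_list_prod.
  apply lsum_ext; intros a _; apply lsum_ext; intros b _;
  apply lsum_ext; intros c _; apply lsum_ext; intros d _.
  unfold indic. destruct quat_eq_dec; reflexivity.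
Qed.

Definition diff_mul (u : quat) (p : quat * quat) : quat := qmul (qsub (fst p) (snd p)) u.

Lemma renergy_diff_mul X u : u <> qzero ->
  renergy X = lsum (fun p =>
    fiber_card quat_eq_dec (diff_mul u) (list_prod X X) (diff_mul u p)) (list_prod X X).
Proof.
  intros Hu. unfold renergy, fiber_card. rewrite lsum_list_prod.
  apply lsum_ext; intros a _; apply lsum_ext; intros b _.
  rewrite lsum_list_prod. apply lsum_ext; intros c _; apply lsum_ext; intros d _.
  apply indic_transport. unfold diff_mul; simpl.
  split; [intros ->; reflexivity | apply qmul_cancel_r; exact Hu].
Qed.

Definition rep (A B : list quat) (u v z : quat) : R :=
  lsum (fun a => lsum (fun b => qindic z (qadd (qmul a u) (qmul b v))) B) A.

Lemma rep_nonneg A B u v z : 0 <= rep A B u v z.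
Proof. apply lsum_nonneg; intros; apply lsum_nonneg; intros; apply indic_bounds. Qed.

Lemma sum_rep_le_energy A B u v : u <> qzero -> v <> qzero ->
  lsum (fun a => lsum (fun b => rep A B u v (qadd (qmul a u) (qmul b v))) B) A
  <= (renergy A + renergy B) / 2.
Proof.
  intros Hu Hv. rewrite (renergy_diff_mul A u Hu), (renergy_diff_mul B v Hv).
  eapply Rle_trans; [|apply collisions_le]. right.
  rewrite lsum_list_prod. apply lsum_ext; intros a _. unfold rep.
  rewrite lsum_comm. apply lsum_ext; intros a' _.
  unfold fiber_card. rewrite lsum_list_prod, lsum_comm.
  apply lsum_ext; intros b' _; apply lsum_ext; intros b _.
  apply indic_transport, lin_eq_iff.
Qed.

Lemma sum_rep_sq_le A B C u v w : w <> qzero -> NoDup C ->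
  lsum (fun c => rep A B u v (qmul c w) * rep A B u v (qmul c w)) C
  <= lsum (fun a => lsum (fun b => rep A B u v (qadd (qmul a u) (qmul b v))) B) A.
Proof.
  intros Hw HC.
  rewrite (lsum_ext _ (fun c => lsum (fun a => lsum (fun b =>
      rep A B u v (qadd (qmul a u) (qmul b v)) * qindic (qadd (qmul a u) (qmul b v)) (qmul c w)) B) A)).
  2:{ intros c _. unfold rep at 1. rewrite Rmult_comm, <- lsum_scal_l.
      apply lsum_ext; intros a _. rewrite <- lsum_scal_l. apply lsum_ext; intros b _.
      rewrite (indic_sym _ (qmul c w)). unfold indic.
      destruct quat_eq_dec as [->|]; ring. }
  rewrite lsum_comm. apply lsum_le; intros a _.
  rewrite lsum_comm. apply lsum_le; intros b _.
  rewrite lsum_scal_l. rewrite <- (Rmult_1_r (rep _ _ _ _ _)) at 2.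
  apply Rmult_le_compat_l; [apply rep_nonneg|].
  apply lsum_indic_inj_le1; [intros x y; apply qmul_cancel_r|]; assumption.
Qed.

Definition lin_sol (A B C : list quat) (u v w : quat) : R :=
  lsum (fun c => rep A B u v (qmul c w)) C.

Lemma le_amgm_sq s t : 0 < t -> s <= t / 2 * (s * s) + / (2 * t).
Proof.
  intros Ht.
  assert (E : t / 2 * (s * s) + / (2 * t) - s = (t * s - 1) * (t * s - 1) / (2 * t)) by (field; lra).
  assert (0 <= (t * s - 1) * (t * s - 1) / (2 * t)).
  { unfold Rdiv; apply Rmult_le_pos; [apply Rle_0_sqr|]. left. apply Rinv_0_lt_compat. lra. }
  lra.
Qed.

Lemma lin_sol_le A B C u v w t :
  u <> qzero -> v <> qzero -> w <> qzero -> NoDup C -> 0 < t ->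
  lin_sol A B C u v w
  <= t / 2 * ((renergy A + renergy B) / 2) + INR (length C) / (2 * t).
Proof.
  intros Hu Hv Hw HC Ht. unfold lin_sol.
  eapply Rle_trans; [apply lsum_le; intros c _; apply (le_amgm_sq _ t Ht)|].
  rewrite lsum_add, lsum_scal_l, lsum_const.
  pose proof (sum_rep_sq_le A B C u v w Hw HC).
  pose proof (sum_rep_le_energy A B u v Hu Hv).
  assert (t / 2 * lsum (fun c => rep A B u v (qmul c w) * rep A B u v (qmul c w)) C
          <= t / 2 * ((renergy A + renergy B) / 2)) by (apply Rmult_le_compat_l; lra).
  unfold Rdiv at 3. lra.
Qed.

Lemma lsum_ge1_of_term {T} (f : T -> R) l z :
  (forall y, In y l -> 0 <= f y) -> In z l -> 1 <= f z -> 1 <= lsum f l.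
Proof. intros Hf Hz H1. pose proof (lsum_ge_term f l z Hf Hz). lra. Qed.

Lemma length_le_lin_sol {P} (decP : forall x y : P, {x = y} + {x <> y})
    A B C u v w (F : quat -> quat -> P) (L : list P) :
  NoDup L ->
  (forall p, In p L -> exists a b c, In a A /\ In b B /\ In c C /\
       qadd (qmul a u) (qmul b v) = qmul c w /\ p = F a b) ->
  INR (length L) <= lin_sol A B C u v w.
Proof.
  intros HL Hwit.
  set (sol := fun c a b => qindic (qmul c w) (qadd (qmul a u) (qmul b v))).
  assert (Hnn : forall p c a b, 0 <= sol c a b * indic decP (F a b) p).
  { intros; apply Rmult_le_pos; apply indic_bounds. }
  rewrite <- (Rmult_1_l (INR _)), <- lsum_const.
  apply Rle_trans with (lsum (fun p => lsum (fun c => lsum (fun a => lsum (fun b =>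
      sol c a b * indic decP (F a b) p) B) A) C) L).
  - apply lsum_le; intros p Hp.
    destruct (Hwit p Hp) as (a & b & c & Ha & Hb & Hc & E & ->).
    apply (lsum_ge1_of_term _ _ c); auto.
    { intros; do 2 (apply lsum_nonneg; intros); auto. }
    apply (lsum_ge1_of_term _ _ a); auto.
    { intros; apply lsum_nonneg; auto. }
    apply (lsum_ge1_of_term _ _ b); auto.
    unfold sol, indic. rewrite E.
    destruct quat_eq_dec; [|congruence]. destruct decP; [lra|congruence].
  - unfold lin_sol, rep. rewrite lsum_comm. apply lsum_le; intros c _.
    rewrite lsum_comm. apply lsum_le; intros a _.
    rewrite lsum_comm. apply lsum_le; intros b _.
    rewrite lsum_scal_l, <- (Rmult_1_r (qindic _ _)) at 1.
    apply Rmult_le_compat_l; [apply indic_bounds|].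
    apply (lsum_indic_inj_le1 decP (fun p => p)); auto.
Qed.

Definition pt (lam mu a b : quat) : quat * quat := (qadd a b, qadd (qmul a lam) (qmul b mu)).

Lemma pt_eq_lin_eq li lj lk ll a b c d :
  pt li lj a b = pt lk ll c d ->
  qadd (qmul a (qsub li ll)) (qmul b (qsub lj ll)) = qmul c (qsub lk ll).
Proof.
  intros E. pose proof (f_equal fst E) as E1. pose proof (f_equal snd E) as E2.
  cbn [fst snd pt] in E1, E2.
  assert (El : qadd (qmul a (qsub li ll)) (qmul b (qsub lj ll))
               = qsub (qadd (qmul a li) (qmul b lj)) (qmul (qadd a b) ll))
    by (destruct a, b, li, lj, ll; apply quat_eq; simpl; ring).
  assert (Er : qmul c (qsub lk ll) = qsub (qadd (qmul c lk) (qmul d ll)) (qmul (qadd c d) ll))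
    by (destruct c, d, lk, ll; apply quat_eq; simpl; ring).
  rewrite El, Er, E1, E2. reflexivity.
Qed.

Lemma in_pts_swap X Y lam mu p : in_pts X Y lam mu p -> in_pts Y X mu lam p.
Proof.
  intros (a & b & Ha & Hb & ->). exists b, a. repeat split; auto.
  rewrite (qadd_comm a), (qadd_comm (qmul a lam)). reflexivity.
Qed.

Definition qpair_eq_dec (x y : quat * quat) : {x = y} + {x <> y}.
Proof. decide equality; apply quat_eq_dec. Defined.

(* With t = sqrt K / tau both terms of lin_sol_le are at most C tau^2 / (2 sqrt K). *)
Lemma balanced_bound tau K C EA EB n :
  1 <= tau -> 1 <= K -> EA <= C * tau ^ 3 / K -> EB <= C * tau ^ 3 / K -> n <= C * tau ->
  sqrt K / tau / 2 * ((EA + EB) / 2) + n / (2 * (sqrt K / tau)) <= C * tau ^ 2 / sqrt K.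
Proof.
  intros Ht HK HA HB Hn.
  assert (Hs : 0 < sqrt K) by (apply sqrt_lt_R0; lra).
  rewrite <- (sqrt_sqrt K) in HA, HB by lra. set (s := sqrt K) in *.
  assert (H1 : s / tau / 2 * ((EA + EB) / 2) <= s / tau / 2 * (C * tau ^ 3 / (s * s))).
  { apply Rmult_le_compat_l; [|lra]. unfold Rdiv.
    apply Rmult_le_pos; [|lra]. apply Rmult_le_pos; [lra|]. left; apply Rinv_0_lt_compat; lra. }
  assert (H2 : n / (2 * (s / tau)) <= C * tau / (2 * (s / tau))).
  { unfold Rdiv at 1 3. apply Rmult_le_compat_r; [|exact Hn].
    left; apply Rinv_0_lt_compat, Rmult_lt_0_compat; [lra|].
    apply Rdiv_lt_0_compat; lra. }
  replace (s / tau / 2 * (C * tau ^ 3 / (s * s))) with (C * tau ^ 2 / s / 2) in H1 by (field; lra).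
  replace (C * tau / (2 * (s / tau))) with (C * tau ^ 2 / s / 2) in H2 by (field; lra).
  lra.
Qed.

Lemma incidence_bound tau K C li lj lk ll Ai Aj Ak Al L :
  1 <= tau -> 1 <= K ->
  li <> ll -> lj <> ll -> lk <> ll ->
  good_set C tau K Ai -> good_set C tau K Aj -> good_set C tau K Ak ->
  NoDup L ->
  (forall p, In p L -> in_pts Ai Aj li lj p /\ in_pts Ak Al lk ll p) ->
  INR (length L) <= C * tau ^ 2 / sqrt K.
Proof.
  intros Ht HK Hil Hjl Hkl (_ & _ & Ei) (_ & _ & Ej) (Nk & Lk & _) HL HLp.
  rewrite INR_energy in Ei, Ej.
  assert (Hpos : 0 < sqrt K / tau) by (apply Rdiv_lt_0_compat; [apply sqrt_lt_R0|]; lra).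
  eapply Rle_trans.
  { apply (length_le_lin_sol qpair_eq_dec Ai Aj Ak (qsub li ll) (qsub lj ll) (qsub lk ll) (pt li lj) L HL).
    intros p Hp. destruct (HLp p Hp) as [(a & b & Ha & Hb & Ep) (c & d & Hc & Hd & Ep')].
    exists a, b, c. repeat split; try assumption.
    exact (pt_eq_lin_eq li lj lk ll a b c d (eq_trans (eq_sym Ep) Ep')). }
  eapply Rle_trans; [apply (lin_sol_le _ _ _ _ _ _ (sqrt K / tau)); auto using qsub_neq0|].
  apply balanced_bound; auto.
Qed.

Theorem lemma4p1 :
  exists c : R, 0 < c /\
  forall (tau K C : R) (li lj lk ll : quat) (Ai Aj Ak Al : list quat),
    1 <= tau -> 1 <= K -> 1 <= C ->
    li <> lj -> lk <> ll ->
    ~ ((li = lk /\ lj = ll) \/ (li = ll /\ lj = lk)) ->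
    good_set C tau K Ai -> good_set C tau K Aj ->
    good_set C tau K Ak -> good_set C tau K Al ->
    forall L : list (quat * quat),
      NoDup L ->
      (forall p, In p L -> in_pts Ai Aj li lj p /\ in_pts Ak Al lk ll p) ->
      INR (length L) <= c * C * tau ^ 2 / sqrt K.
Proof.
  exists 1. split; [lra|].
  intros tau K C li lj lk ll Ai Aj Ak Al Ht HK _ Hij Hkl Hpair Gi Gj Gk Gl L HL HLp.
  rewrite Rmult_1_l.
  destruct (quat_eq_dec li ll) as [Eil|Nil]; [|destruct (quat_eq_dec lj ll) as [Ejl|Njl]].
  3: exact (incidence_bound tau K C li lj lk ll Ai Aj Ak Al L Ht HK Nil Njl Hkl Gi Gj Gk HL HLp).
  (* ll is one of li, lj: exchange the roles of (Ak, lk) and (Al, ll). *)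
  all: apply (incidence_bound tau K C li lj ll lk Ai Aj Al Ak L); auto;
       [ intro; subst; tauto .. | intros p Hp; destruct (HLp p Hp); auto using in_pts_swap ].
Qed.
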